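(* Let $K$ be a number field of degree $n$ with $r_1$ real embeddings and $2r_2$ non-real complex embeddings, and let $\sigma_1,\dots,\sigma_n$ be its complex embeddings numbered so that $\sigma_i(K)\subset\mathbb{R}$ for $1\leqslant i\leqslant r_1$ and $\sigma_{j+r_2}=\overline{\sigma_j}$ for $r_1+1\leqslant j\leqslant r_1+r_2$. Embed $K$ into $V=\mathbb{R}^{r_1}\times\mathbb{C}^{r_2}$ via $x\mapsto(\sigma_1(x),\dots,\sigma_{r_1+r_2}(x))$, so that every fractional ideal of $O_K$ is a lattice in $V$. Let $\|\ \|$ be a norm on $V$ such that $\|xy\|\leqslant\|x\|\|y\|$ for all $x,y\in V$ (product taken componentwise). Let $k,\ell\in\{1,\dots,n\}$ with $k+\ell\geqslant n+1$, and let $I,J$ be fractional ideals of $O_K$. Then $\lambda_n(IJ)\leqslant\lambda_k(I)\lambda_\ell(J)$.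
   Context: For a lattice $\Gamma$ of the $n$-dimensional real vector space $V$ equipped with the norm $\|\ \|$ and $i\in\{1,\dots,n\}$, the $i$-th Minkowski minimum is $\lambda_i(\Gamma)=\min\{\max(\|e_1\|,\dots,\|e_i\|)\ ;\ (e_1,\dots,e_i)\text{ is a linearly independent family of elements of }\Gamma\}$. *)

From mathcomp Require Import all_boot all_order all_algebra all_field.
From mathcomp Require Import all_classical all_reals.
From mathcomp Require Import complex.
Set Implicit Arguments. Unset Strict Implicit. Unset Printing Implicit Defensive.
Import Order.TTheory GRing.Theory Num.Theory.
Local Open Scope ring_scope.
Local Open Scope classical_set_scope.

Definition V (R : realType) (r1 r2 : nat) : Type :=
  (('I_r1 -> R) * ('I_r2 -> R[i]))%type.

Definition vzero (R : realType) (r1 r2 : nat) : V R r1 r2 :=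
  (fun _ => 0, fun _ => 0).

Definition vadd (R : realType) (r1 r2 : nat) (x y : V R r1 r2) : V R r1 r2 :=
  (fun i => x.1 i + y.1 i, fun j => x.2 j + y.2 j).

Definition vscale (R : realType) (r1 r2 : nat) (a : R) (x : V R r1 r2)
  : V R r1 r2 :=
  (fun i => a * x.1 i, fun j => Complex a 0 * x.2 j).

Definition vmul (R : realType) (r1 r2 : nat) (x y : V R r1 r2) : V R r1 r2 :=
  (fun i => x.1 i * y.1 i, fun j => x.2 j * y.2 j).

Definition is_norm (R : realType) (r1 r2 : nat) (N : V R r1 r2 -> R) : Prop :=
  [/\ (forall x, N x = 0 -> x = vzero R r1 r2),
      (forall a x, N (vscale a x) = `|a| * N x) &
      (forall x y, N (vadd x y) <= N x + N y)].

Definition vlincomb (R : realType) (r1 r2 m : nat) (c : 'I_m -> R)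
  (e : 'I_m -> V R r1 r2) : V R r1 r2 :=
  (fun i => \sum_(j < m) c j * (e j).1 i,
   fun k => \sum_(j < m) Complex (c j) 0 * (e j).2 k).

Definition lin_indep (R : realType) (r1 r2 m : nat) (e : 'I_m -> V R r1 r2)
  : Prop :=
  forall c : 'I_m -> R, vlincomb c e = vzero R r1 r2 -> forall j, c j = 0.

(* i-th Minkowski minimum of the lattice L (a subset of V) w.r.t. N:
   the minimum (here written as the infimum, which is attained for a
   lattice) of max(N e_1, ..., N e_i) over linearly independent families
   (e_1, ..., e_i) of elements of L. *)
Definition minkowski_min (R : realType) (r1 r2 : nat) (N : V R r1 r2 -> R)
  (L : set (V R r1 r2)) (i : nat) : R :=
  inf [set r : R | exists e : 'I_i -> V R r1 r2,
         [/\ (forall j, L (e j)), lin_indep e &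
             r = \big[Num.max/0]_(j < i) N (e j)]].

Definition integral_elt (K : fieldExtType rat) (x : K) : Prop :=
  exists p : {poly int}, p \is monic /\ root (map_poly (fun z : int => z%:~R) p) x.

Definition frac_ideal (K : fieldExtType rat) (I : set K) : Prop :=
  [/\ I 0,
      (forall x y, I x -> I y -> I (x - y)),
      (forall a x, integral_elt a -> I x -> I (a * x)),
      (exists x, I x /\ x != 0) &
      (exists d : K, d != 0 /\ forall x, I x -> integral_elt (d * x))].

Definition ideal_mul (K : fieldExtType rat) (I J : set K) : set K :=
  [set z | exists (m : nat) (x y : 'I_m -> K),
     (forall j, I (x j) /\ J (y j)) /\ z = \sum_(j < m) x j * y j].

Definition embV (R : realType) (K : fieldExtType rat) (r1 r2 : nat)
  (sr : 'I_r1 -> {rmorphism K -> R[i]}) (sc : 'I_r2 -> {rmorphism K -> R[i]})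
  (x : K) : V R r1 r2 :=
  (fun i => complex.Re (sr i x), fun j => sc j x).

(* the full list of complex embeddings sigma_1, ..., sigma_n:
   inl i            ~ sigma_i            (1 <= i <= r1, real),
   inr (inl j)      ~ sigma_{r1+j}       (1 <= j <= r2),
   inr (inr j)      ~ sigma_{r1+r2+j} = conj sigma_{r1+j}. *)
Definition all_emb (R : realType) (K : fieldExtType rat) (r1 r2 : nat)
  (sr : 'I_r1 -> {rmorphism K -> R[i]}) (sc : 'I_r2 -> {rmorphism K -> R[i]})
  (a : 'I_r1 + ('I_r2 + 'I_r2)) : K -> R[i] :=
  match a with
  | inl i => fun x => sr i x
  | inr (inl j) => fun x => sc j x
  | inr (inr j) => fun x => (sc j x)^*
  end.

From mathcomp Require Import all_boot all_order all_algebra all_field.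
From mathcomp Require Import all_classical all_reals.
From mathcomp Require Import complex.
From mathcomp Require Import zify ring lra.
Import Order.TTheory GRing.Theory Num.Theory VectorInternalTheory.
Local Open Scope ring_scope.
Local Open Scope classical_set_scope.

(* R-linearly independent e_1..e_k in I and f_1..f_l in J are the images of
   Q-linearly independent x_1..x_k in I and y_1..y_l in J.  As k + l > n,
   the products x_i y_j span K over Q: otherwise a nonzero Q-linear form u
   vanishes on all of them; the map w |-> (u (w y_j))_j then kills the span of
   the x_i, so its rank is below l and some nonzero g in the span of the y_j has
   u (w g) = 0 for all w, forcing u = 0.  So n of these products form a Q-basis
   of K inside IJ.  By Dedekind's independence of the n distinct embeddings, the
   image of a Q-basis of K in V is R-linearly independent, and
   |x_i y_j| <= |x_i| |y_j| bounds the n-th minimum of IJ by the product of the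
   maxima for the x_i and the y_j; it remains to take infima. *)

Lemma row_freeN_ker (F : fieldType) m n (A : 'M[F]_(m, n)) :
  ~~ row_free A -> exists2 v : 'rV_m, v != 0 & v *m A = 0.
Proof. by rewrite -kermx_eq0 => /rowV0Pn[v /sub_kermxP vA0 v0]; exists v. Qed.

Lemma row_fullN_ker (F : fieldType) m n (A : 'M[F]_(m, n)) :
  ~~ row_full A -> exists2 u : 'cV_n, u != 0 & A *m u = 0.
Proof.
rewrite /row_full -mxrank_tr => /row_freeN_ker[v v0 vA0].
exists v^T; first by rewrite trmx_eq0.
by rewrite -[A]trmxK -trmx_mul vA0 trmx0.
Qed.

Section FreeFamily.
Context {F : fieldType} {vT : vectType F}.

Definition free_family {m} (x : 'I_m -> vT) :=
  forall c : 'I_m -> F, \sum_i c i *: x i = 0 -> forall i, c i = 0.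

Definition coordmx {m} (x : 'I_m -> vT) : 'M[F]_(m, dim vT) :=
  \matrix_i v2r (x i).

Lemma mul_coordmx {m} (x : 'I_m -> vT) (c : 'rV_m) :
  c *m coordmx x = v2r (\sum_i c 0 i *: x i).
Proof.
rewrite mulmx_sum_row linear_sum; apply: eq_bigr => i _.
by rewrite linearZ rowK.
Qed.

Lemma free_familyP {m} (x : 'I_m -> vT) :
  free_family x <-> row_free (coordmx x).
Proof.
split=> [xfree | xfree c cx0 i].
  apply: inj_row_free => c; rewrite mul_coordmx => /(congr1 r2v).
  rewrite v2rK linear0 => /xfree c0; apply/rowP => i; by rewrite c0 mxE.
have /row_free_inj/(_ (\row_i c i) 0) := xfree; rewrite mul0mx mul_coordmx.
under eq_bigr do rewrite mxE.
by rewrite cx0 linear0 => /(_ erefl)/rowP/(_ i); rewrite !mxE.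
Qed.

Lemma free_family_span {z : 'I_(dim vT) -> vT} :
  free_family z -> forall w, exists d : 'I_(dim vT) -> F, w = \sum_j d j *: z j.
Proof.
move=> /free_familyP zfree w.
have zunit : coordmx z \in unitmx by rewrite -row_free_unit.
exists (fun j => (v2r w *m invmx (coordmx z)) 0 j); apply: v2r_inj.
by rewrite -mul_coordmx mulmxKV.
Qed.

Lemma free_family_delta : free_family (fun i : 'I_(dim vT) => r2v (delta_mx 0 i)).
Proof.
apply/free_familyP; rewrite row_free_unit.
suff -> : coordmx (fun i : 'I_(dim vT) => r2v (delta_mx 0 i)) = 1%:M by exact: unitmx1.
by apply/matrixP => i j; rewrite !mxE r2vK mxE eqxx eq_sym.
Qed.

End FreeFamily.

Section ProductBasis.
Context {F : fieldType} {K : fieldExtType F}.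

(* A linear form on K is a column vector u, with value v2r w *m u at w. *)

Lemma form_mulr_eq0 (u : 'cV[F]_(dim K)) (g : K) :
  g != 0 -> (forall w, v2r (w * g) *m u = 0) -> u = 0.
Proof.
move=> g0 ug; apply/colP => i; have := ug (r2v (delta_mx 0 i) / g).
by rewrite mulfVK // r2vK -rowE => /rowP/(_ 0); rewrite !mxE.
Qed.

Definition mulr_form_mx {l} (y : 'I_l -> K) (u : 'cV[F]_(dim K)) :
    'M[F]_(dim K, l) :=
  \matrix_(m, j) (v2r (r2v (delta_mx 0 m) * y j) *m u) 0 0.

Lemma mul_mulr_form_mx {l} (y : 'I_l -> K) (u : 'cV[F]_(dim K)) (w : K) :
  v2r w *m mulr_form_mx y u = \row_j (v2r (w * y j) *m u) 0 0.
Proof.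
apply/rowP => j; rewrite [in RHS]mxE.
have -> : w * y j = \sum_m (v2r w) 0 m *: (r2v (delta_mx 0 m) * y j).
  rewrite -[w in LHS]v2rK [in LHS](row_sum_delta (v2r w)) linear_sum mulr_suml.
  by apply: eq_bigr => m _; rewrite linearZ scalerAl.
rewrite linear_sum mulmx_suml summxE [in LHS]mxE; apply: eq_bigr => m _.
by rewrite linearZ -scalemxAl !mxE.
Qed.

Lemma mulr_free_form_kernel {k l} {x : 'I_k -> K} {y : 'I_l -> K}
    {u : 'cV[F]_(dim K)} :
  (dim K < k + l)%N -> free_family x -> free_family y ->
  (forall i j, v2r (x i * y j) *m u = 0) ->
  exists2 g, g != 0 & forall w, v2r (w * g) *m u = 0.
Proof.
move=> klK /free_familyP xfree yfree xyu.
have xC : coordmx x *m mulr_form_mx y u = 0.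
  apply/row_matrixP => i; rewrite row_mul row0 rowK mul_mulr_form_mx.
  by apply/rowP => j; rewrite [in LHS]mxE xyu !mxE.
have rankC : (\rank (mulr_form_mx y u) < l)%N.
  have := mxrankS (introT sub_kermxP xC).
  rewrite mxrank_ker (eqP xfree) leq_subRL ?rank_leq_row // => le_rk.
  by have := leq_ltn_trans le_rk klK; rewrite addnC ltn_add2l.
have [d d0 Cd] : exists2 d : 'cV_l, d != 0 & mulr_form_mx y u *m d = 0.
  by apply: row_fullN_ker; rewrite /row_full ltn_eqF.
exists (\sum_j d j 0 *: y j).
  apply: contra d0 => /eqP /yfree d_eq0; apply/eqP/colP => j.
  by rewrite d_eq0 mxE.
move=> w; transitivity (v2r w *m mulr_form_mx y u *m d); last first.
  by rewrite -mulmxA Cd mulmx0.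
rewrite mulr_sumr linear_sum mulmx_suml mul_mulr_form_mx.
apply/matrixP => i i'; rewrite !ord1 summxE !mxE; apply: eq_bigr => j _.
by rewrite -scalerAr linearZ -scalemxAl !mxE mulrC.
Qed.

Lemma free_family_mulr {k l} {x : 'I_k -> K} {y : 'I_l -> K} :
  (dim K < k + l)%N -> free_family x -> free_family y ->
  exists2 z : 'I_(dim K) -> K,
    free_family z & forall i, exists a b, z i = x a * y b.
Proof.
move=> klK xfree yfree.
pose xy (m : 'I_#|{: 'I_k * 'I_l}|) := x (enum_val m).1 * y (enum_val m).2.
have xy_full : row_full (coordmx xy).
  apply: contraT => /row_fullN_ker[u u0 xyu]; case/eqP: u0.
  have xyu0 i j : v2r (x i * y j) *m u = 0.
    have := congr1 (row (enum_rank (i, j))) xyu.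
    by rewrite row_mul row0 rowK /xy enum_rankK.
  have [g g0 gu] := mulr_free_form_kernel klK xfree yfree xyu0.
  exact: form_mulr_eq0 g0 gu.
have : exists f : 'I_(\rank (coordmx xy)) -> _, row_free (rowsub f (coordmx xy)).
  by exists (maxrankfun (coordmx xy)); apply: maxrowsub_free.
rewrite (eqP xy_full) => -[f f_free].
exists (xy \o f); last by move=> i; do 2 eexists.
apply/free_familyP; congr row_free: f_free.
by apply/matrixP => i j; rewrite !mxE.
Qed.

End ProductBasis.

Lemma integral_lead_coef_mul {R S : comNzRingType} (f : {rmorphism R -> S})
    {p : {poly R}} {y : S} :
  root (map_poly f p) y -> integralOver f (f (lead_coef p) * y).
Proof.
have [/size1_polyC pE | ] := leqP (size p) 1.
  rewrite pE map_polyC rootC lead_coefC => /eqP->; rewrite mul0r.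
  exact: integral0.
set c := lead_coef p; set d := (size p).-2 => p_big py.
have sizep : size p = d.+2 by rewrite /d; lia.
(* q(X) = c^d p(X / c) is monic with integral coefficients and q(c y) = 0 *)
pose q := \poly_(i < d.+2) (if i == d.+1 then 1 else p`_i * c ^+ (d - i)).
exists q.
  by rewrite monicE lead_coef_poly ?eqxx ?oner_neq0.
have sizeq : (size q <= d.+2)%N by exact: size_poly.
have sizefp (g : {poly R}) : (size (map_poly f g) <= size g)%N by exact: size_poly.
apply/rootP; transitivity (f c ^+ d * (map_poly f p).[y]); last first.
  by rewrite (rootP py) mulr0.
rewrite (horner_coef_wide _ (leq_trans (sizefp q) sizeq)).
rewrite (horner_coef_wide _ (leq_trans (sizefp p) (eq_leq sizep))) mulr_sumr.
apply: eq_bigr => i _; rewrite !coef_map /= coef_poly ltn_ord.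
case: eqP => [-> | /eqP i_neq].
  rewrite rmorph1 mul1r exprMn exprS -mulrA mulrCA; congr (_ * (_ * _)).
  by rewrite /c lead_coefE sizep.
have le_id : (i <= d)%N by have := ltn_ord i; lia.
rewrite rmorphM rmorphXn exprMn -[d in f c ^+ d](subnK le_id) exprD; ring.
Qed.

Lemma integral_int_mul {K : fieldExtType rat} (y : K) :
  exists2 c : int, c != 0 & integral_elt (c%:~R * y).
Proof.
have [q qmonic qy] := alg_integral y.
have [q0 [a a0 qE]] := rat_poly_scale q.
have q0_neq0 : q0 != 0.
  apply: contraTneq qmonic => q00.
  by rewrite qE q00 map_poly0 scaler0 monicE lead_coef0 eq_sym oner_eq0.
exists (lead_coef q0); first by rewrite lead_coef_eq0.
have q0y : root (map_poly (intr : int -> K) q0) y.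
  move: qy; rewrite qE map_polyZ rootZ ?fmorph_eq0 ?invr_eq0 ?intr_eq0 //.
  by rewrite -map_poly_comp (eq_map_poly (rmorph_int _)).
by have [p pmonic proot] := integral_lead_coef_mul intr q0y; exists p.
Qed.

Lemma frac_ideal_free (K : fieldExtType rat) (I : set K) :
  frac_ideal I -> exists2 e : 'I_(dim K) -> K, forall i, I (e i) & free_family e.
Proof.
case=> _ _ I_mul [x0 [Ix0 x0_neq0]] _.
pose b (i : 'I_(dim K)) : K := r2v (delta_mx 0 i).
have /choice[c cP] : forall i, exists c : int, c != 0 /\ integral_elt (c%:~R * b i).
  by move=> i; have [c] := integral_int_mul (b i); exists c.
exists (fun i => (c i)%:~R * b i * x0) => [i | q qe0 i].
  by apply: I_mul => //; exact: (cP i).2.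
have : (\sum_j (q j * (c j)%:~R) *: b j) * x0 = 0.
  rewrite -[RHS]qe0 mulr_suml; apply: eq_bigr => j _.
  by rewrite -[in RHS](rmorph_int (in_alg K)) mulr_algl -!scalerAl scalerA.
move/eqP; rewrite mulf_eq0 (negbTE x0_neq0) orbF => /eqP.
move/free_family_delta/(_ i)/eqP.
by rewrite mulf_eq0 intr_eq0 (negbTE (cP i).1) orbF => /eqP.
Qed.

Lemma ideal_mul_mul {K : fieldExtType rat} {I J : set K} {x y : K} :
  I x -> J y -> ideal_mul I J (x * y).
Proof.
by move=> Ix Jy; exists 1%N, (fun=> x), (fun=> y); rewrite big_ord1.
Qed.

Lemma rmorph_free {K : nzRingType} {L : fieldType} {A : finType}
    {s : A -> {rmorphism K -> L}} :
  (forall a b, s a =1 s b -> a = b) ->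
  forall c : A -> L, (forall x, \sum_a c a * s a x = 0) -> forall a, c a = 0.
Proof.
move=> s_inj.
suff free_seq (r : seq A) : uniq r -> forall c : A -> L,
    (forall x, \sum_(a <- r) c a * s a x = 0) -> forall a, a \in r -> c a = 0.
  by move=> c sc0 a; apply: (free_seq (index_enum A)); rewrite ?index_enum_uniq.
elim: r => [|b r IHr] //= /andP[br r_uniq] c sc0.
have cr0 a : a \in r -> c a = 0.
  move=> ar; have ab : a != b by apply: contraNneq br => <-.
  have [y sy] : exists y, s a y != s b y.
    apply: boolp.contrapT => nsy; case/eqP: ab; apply: s_inj => y.
    by apply/eqP/negPn/negP => sy; apply: nsy; exists y.
  suff /eqP : c a * (s a y - s b y) = 0.
    by rewrite mulf_eq0 subr_eq0 (negbTE sy) orbF => /eqP.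
  (* the relation at x y minus s b y times the relation at x has no b term *)
  apply: (IHr r_uniq (fun a => c a * (s a y - s b y))) ar => x.
  have := sc0 (x * y); have := sc0 x; rewrite !big_cons => sx0 sxy0.
  transitivity (\sum_(a <- r) c a * s a (x * y) - s b y * \sum_(a <- r) c a * s a x).
    by rewrite mulr_sumr -sumrB; apply: eq_bigr => a2 _; rewrite rmorphM; ring.
  rewrite (canRL (addKr _) sxy0) (canRL (addKr _) sx0) rmorphM; ring.
move=> a; rewrite inE => /predU1P[-> | /cr0 //].
have := sc0 1; rewrite big_cons big1_seq ?rmorph1 ?mulr1 ?addr0 //.
by move=> a' /andP[_ /cr0 ->]; rewrite mul0r.
Qed.

Lemma rmorph_basis_free {L : fieldType} {K : fieldExtType rat} {A : finType}
    {s : A -> {rmorphism K -> L}} {z : 'I_(dim K) -> K} {c : 'I_(dim K) -> L} :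
  (forall a b, s a =1 s b -> a = b) -> #|A| = dim K -> free_family z ->
  (forall a, \sum_j s a (z j) * c j = 0) -> forall j, c j = 0.
Proof.
move=> s_inj cardA zfree sc0.
pose a_ (i : 'I_(dim K)) := enum_val (cast_ord (esym cardA) i).
pose M := \matrix_(i, j) s (a_ i) (z j).
have Mfree : row_free M.
  apply: contraT => /row_freeN_ker[u u0 uM]; case/eqP: u0; apply/rowP => i.
  rewrite mxE; apply: (@rmorph_free _ _ _ (fun i => s (a_ i))) => [i1 i2 |w].
    by move/s_inj/enum_val_inj/cast_ord_inj.
  have uMz j : \sum_i u 0 i * s (a_ i) (z j) = 0.
    have /rowP/(_ j) := uM; rewrite !mxE => uMj.
    by rewrite -[RHS]uMj; apply: eq_bigr => i' _; rewrite mxE.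
  have [d ->] := free_family_span zfree w.
  under eq_bigr do rewrite rmorph_sum mulr_sumr.
  rewrite exchange_big big1 // => j _.
  under eq_bigr do rewrite rmorphZ_num mulrCA.
  by rewrite -mulr_sumr uMz mulr0.
have Munit : M \in unitmx by rewrite -row_free_unit.
have Mc : M *m \col_j c j = 0.
  apply/colP => i; rewrite !mxE -[RHS](sc0 (a_ i)).
  by apply: eq_bigr => j _; rewrite !mxE.
move=> j; have := mulKmx Munit (\col_j c j).
by rewrite Mc mulmx0 => /colP/(_ j); rewrite !mxE => ->.
Qed.

Lemma is_norm_ge0 {R : realType} {r1 r2 : nat} {N : V R r1 r2 -> R} :
  is_norm N -> forall x, 0 <= N x.
Proof.
case=> _ N_scale N_triangle x.
have N0 : N (vzero R r1 r2) = 0.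
  have -> : vzero R r1 r2 = vscale 0 x.
    by congr pair; apply: boolp.funext => t /=; rewrite mul0r.
  by rewrite N_scale normr0 mul0r.
have := N_triangle x (vscale (-1) x).
have -> : vadd x (vscale (-1) x) = vzero R r1 r2.
  have Cm1 : Complex (-1 : R) 0 = -1 by apply/eqP; rewrite eq_complex /= oppr0 !eqxx.
  by congr pair; apply: boolp.funext => t /=; rewrite ?Cm1 mulN1r subrr.
rewrite N0 N_scale normrN normr1 mul1r; lra.
Qed.

Lemma lin_indep_widen {R : realType} {r1 r2 m n : nat} (mn : (m <= n)%N)
    {e : 'I_n -> V R r1 r2} :
  lin_indep e -> lin_indep (fun i : 'I_m => e (widen_ord mn i)).
Proof.
move=> e_indep c ce0 i.
pose c' (j : 'I_n) : R := oapp c 0 (insub (nat_of_ord j) : option 'I_m).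
have c'_widen i' : c' (widen_ord mn i') = c i'.
  by rewrite /c' insubT //= => lt_i'm; congr c; apply: val_inj.
have c'_out (j : 'I_n) : ~~ (j < m)%N -> c' j = 0.
  by move=> j_out; rewrite /c' insubF // (negbTE j_out).
have sum_c' (T : nmodType) (G : R -> 'I_n -> T) : (forall j, G 0 j = 0) ->
    \sum_(j < n) G (c' j) j = \sum_(i' < m) G (c i') (widen_ord mn i').
  move=> G0; rewrite (bigID (fun j : 'I_n => (j < m)%N)) /= [X in _ + X]big1.
    rewrite addr0 (big_ord_narrow (F := fun j => G (c' j) j) mn).
    by apply: eq_bigr => i' _; rewrite c'_widen.
  by move=> j /c'_out ->.
suff /e_indep/(_ (widen_ord mn i)) : vlincomb c' e = vzero R r1 r2.
  by rewrite c'_widen.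
rewrite -ce0; congr pair; apply: boolp.funext => t /=.
  by apply: (sum_c' _ (fun a j => a * (e j).1 t)) => j; rewrite mul0r.
by apply: (sum_c' _ (fun a j => Complex a 0 * (e j).2 t)) => j; exact: mul0r.
Qed.

(* [minkowski_min N L i] is [inf (minkowski_set N L i)] by definition. *)
Definition minkowski_set {R : realType} {r1 r2 : nat} (N : V R r1 r2 -> R)
    (L : set (V R r1 r2)) (i : nat) : set R :=
  [set r : R | exists e : 'I_i -> V R r1 r2,
     [/\ (forall j, L (e j)), lin_indep e &
         r = \big[Num.max/0]_(j < i) N (e j)]].

Lemma minkowski_set_ge0 {R : realType} {r1 r2 : nat} (N : V R r1 r2 -> R)
    (L : set (V R r1 r2)) (i : nat) (r : R) :
  minkowski_set N L i r -> 0 <= r.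
Proof. by case=> e [_ _ ->]; apply/bigmax_geP; left. Qed.

Lemma minkowski_min_le {R : realType} {r1 r2 : nat} {N : V R r1 r2 -> R}
    {L : set (V R r1 r2)} {i : nat} {e : 'I_i -> V R r1 r2} :
  (forall j, L (e j)) -> lin_indep e ->
  minkowski_min N L i <= \big[Num.max/0]_(j < i) N (e j).
Proof.
move=> eL e_indep; apply: ge_inf; last by exists e.
by exists 0 => r /minkowski_set_ge0.
Qed.

Lemma le_inf_mulr (R : realType) (A : set R) (b c : R) :
  A !=set0 -> 0 <= b -> (forall a, A a -> c <= a * b) -> c <= inf A * b.
Proof.
move=> [a0 Aa0]; rewrite le_eqVlt => /predU1P[<- | b_gt0] cA.
  by rewrite mulr0; have := cA a0 Aa0; rewrite mulr0.
rewrite -ler_pdivrMr //; apply: lb_le_inf; first by exists a0.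
by move=> a Aa; rewrite ler_pdivrMr //; apply: cA.
Qed.

Lemma le_inf_mul (R : realType) (A B : set R) (c : R) :
  A !=set0 -> B !=set0 -> (forall a, A a -> 0 <= a) -> (forall b, B b -> 0 <= b) ->
  (forall a b, A a -> B b -> c <= a * b) -> c <= inf A * inf B.
Proof.
move=> A0 B0 A_ge0 B_ge0 cAB; rewrite mulrC; apply: le_inf_mulr => //.
  by apply: lb_le_inf.
move=> b Bb; rewrite mulrC; apply: le_inf_mulr => // [|a Aa].
  exact: B_ge0.
exact: cAB.
Qed.

Lemma Re_real_complexM {R : rcfType} (a : R) (w : R[i]) :
  complex.Re ((a%:C)%C * w) = a * complex.Re w.
Proof. by case: w => w1 w2 /=; rewrite mul0r subr0. Qed.

Section Embeddings.
Context {R : realType} {K : fieldExtType rat} {r1 r2 : nat}.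
Context {sr : 'I_r1 -> {rmorphism K -> R[i]}} {sc : 'I_r2 -> {rmorphism K -> R[i]}}.
Hypothesis sr_real : forall i x, complex.Im (sr i x) = 0.
Hypothesis deg : (r1 + 2 * r2)%N = \dim {:K}.
Hypothesis emb_inj :
  forall a b, (forall x, all_emb sr sc a x = all_emb sr sc b x) -> a = b.

Definition emb_rmorph (a : 'I_r1 + ('I_r2 + 'I_r2)) : {rmorphism K -> R[i]} :=
  match a with
  | inl i => sr i
  | inr (inl j) => sc j
  | inr (inr j) => conjc \o sc j : {rmorphism K -> R[i]}
  end.

Lemma all_embE a x : all_emb sr sc a x = emb_rmorph a x.
Proof. by case: a => [|[]]. Qed.

Lemma sr_complexRe i x : sr i x = ((complex.Re (sr i x))%:C)%C.
Proof. by move: (sr_real i x); case: (sr i x) => a b /= ->. Qed.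

Lemma embV_mul x y :
  embV sr sc (x * y) = vmul (embV sr sc x) (embV sr sc y).
Proof.
congr pair; apply: boolp.funext => i /=; rewrite rmorphM //.
by rewrite (sr_complexRe i x) (sr_complexRe i y) -rmorphM.
Qed.

Lemma vlincomb_embV_eq0 {m} (z : 'I_m -> K) (c : 'I_m -> R) :
  vlincomb c (fun j => embV sr sc (z j)) = vzero R r1 r2 ->
  forall a, \sum_j emb_rmorph a (z j) * ((c j)%:C)%C = 0.
Proof.
move=> cz0; have /= cz1 := congr1 fst cz0; have /= cz2 := congr1 snd cz0.
case=> [i | [j | j]] /=.
- have /= ci := congr1 (fun f => f i) cz1.
  transitivity ((\sum_j c j * complex.Re (sr i (z j)))%:C)%C.
    rewrite rmorph_sum; apply: eq_bigr => j _.
    by rewrite rmorphM mulrC {1}(sr_complexRe i (z j)).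
  by rewrite ci.
- have /= cj := congr1 (fun f => f j) cz2.
  by rewrite -[RHS]cj; apply: eq_bigr => j' _; rewrite mulrC.
- have /= cj := congr1 (fun f => f j) cz2.
  transitivity ((\sum_j' ((c j')%:C)%C * sc j (z j'))^*)%C; last by rewrite cj conjc0.
  by rewrite rmorph_sum; apply: eq_bigr => j' _; rewrite rmorphM mulrC /= oppr0.
Qed.

Lemma embV_free {z : 'I_(dim K) -> K} :
  free_family z -> lin_indep (fun j => embV sr sc (z j)).
Proof.
move=> zfree c /vlincomb_embV_eq0 cz0 j.
have emb_rmorph_inj a b : emb_rmorph a =1 emb_rmorph b -> a = b.
  by move=> ab; apply: emb_inj => x; rewrite !all_embE.
have card : #|{: 'I_r1 + ('I_r2 + 'I_r2)}| = dim K.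
  by rewrite !card_sum !card_ord -dimvf -deg; lia.
have := rmorph_basis_free emb_rmorph_inj card zfree cz0 j.
by move=> cj0; apply: complexI; rewrite cj0 rmorph0.
Qed.

Lemma embV_indep_free {m} (x : 'I_m -> K) :
  lin_indep (fun j => embV sr sc (x j)) -> free_family x.
Proof.
move=> x_indep q qx0 i.
suff /(_ i)/eqP : forall j, (ratr (q j) : R) = 0 by rewrite fmorph_eq0 => /eqP.
apply: x_indep; congr pair; apply: boolp.funext => t /=.
- transitivity (complex.Re (sr t (\sum_j q j *: x j))); last by rewrite qx0 rmorph0.
  rewrite rmorph_sum raddf_sum; apply: eq_bigr => j _.
  rewrite rmorphZ_num -(fmorph_rat (real_complex R)).
  by symmetry; apply: Re_real_complexM.
- transitivity (sc t (\sum_j q j *: x j)); last by rewrite qx0 rmorph0.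
  rewrite rmorph_sum; apply: eq_bigr => j _.
  by rewrite rmorphZ_num -(fmorph_rat (real_complex R)).
Qed.

Lemma embV_preimage_free {m} {L : set K} {e : 'I_m -> V R r1 r2} :
  (forall j, (embV sr sc @` L) (e j)) -> lin_indep e ->
  exists2 x : 'I_m -> K,
    (forall j, L (x j)) /\ free_family x & e = (fun j => embV sr sc (x j)).
Proof.
move=> eL e_indep.
have /choice[x xP] j : exists x, L x /\ embV sr sc x = e j.
  by have [x] := eL j; exists x.
have ex : e = (fun j => embV sr sc (x j)).
  by apply: boolp.funext => j; rewrite (xP j).2.
exists x => //; split => [j | ]; first exact: (xP j).1.
by apply: embV_indep_free; rewrite -ex.
Qed.

Variable N : V R r1 r2 -> R.
Hypothesis N_norm : is_norm N.
Hypothesis N_mul : forall x y, N (vmul x y) <= N x * N y.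

Lemma minkowski_set_neq0 (L : set K) (m : nat) :
  frac_ideal L -> (m <= dim K)%N -> minkowski_set N (embV sr sc @` L) m !=set0.
Proof.
move=> /frac_ideal_free[x xL xfree] mK.
pose e j := embV sr sc (x (widen_ord mK j)).
exists (\big[Num.max/0]_(j < m) N (e j)), e; split => // [j |].
  by exists (x (widen_ord mK j)).
exact: (lin_indep_widen mK (embV_free xfree)).
Qed.

Lemma minkowski_min_mul_le {k l} (I J : set K)
    (e : 'I_k -> V R r1 r2) (f : 'I_l -> V R r1 r2) :
  (dim K < k + l)%N ->
  (forall j, (embV sr sc @` I) (e j)) -> lin_indep e ->
  (forall j, (embV sr sc @` J) (f j)) -> lin_indep f ->
  minkowski_min N (embV sr sc @` ideal_mul I J) (dim K)
    <= \big[Num.max/0]_(j < k) N (e j) * \big[Num.max/0]_(j < l) N (f j).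
Proof.
move=> klK eI e_indep fJ f_indep.
have [x [xI xfree] ->] := embV_preimage_free eI e_indep.
have [y [yJ yfree] ->] := embV_preimage_free fJ f_indep.
have [z zfree zxy] := free_family_mulr klK xfree yfree.
apply: le_trans (minkowski_min_le _ (embV_free zfree)) _.
  move=> j; have [a [b ->]] := zxy j.
  by exists (x a * y b) => //; exact: ideal_mul_mul (xI a) (yJ b).
apply: bigmax_le => [|j _]; first by apply: mulr_ge0; apply/bigmax_geP; left.
have [a [b ->]] := zxy j; rewrite embV_mul; apply: le_trans (N_mul _ _) _.
by apply: ler_pM; rewrite ?is_norm_ge0 //; apply: le_bigmax.
Qed.

End Embeddings.

Theorem mainTheorem4 (R : realType) (K : fieldExtType rat) (r1 r2 : nat)
  (sr : 'I_r1 -> {rmorphism K -> R[i]}) (sc : 'I_r2 -> {rmorphism K -> R[i]})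
  (hdeg : (r1 + 2 * r2)%N = \dim {:K})
  (hreal : forall i x, complex.Im (sr i x) = 0)
  (hdistinct : forall a b, (forall x, all_emb sr sc a x = all_emb sr sc b x) -> a = b)
  (hall : forall f : {rmorphism K -> R[i]},
            exists a, forall x, f x = all_emb sr sc a x)
  (N : V R r1 r2 -> R) (hN : is_norm N)
  (hmul : forall x y, N (vmul x y) <= N x * N y)
  (k l : nat) (hk : (1 <= k <= \dim {:K})%N) (hl : (1 <= l <= \dim {:K})%N)
  (hkl : (\dim {:K} + 1 <= k + l)%N)
  (I J : set K) (hI : frac_ideal I) (hJ : frac_ideal J) :
  minkowski_min N (embV sr sc @` ideal_mul I J) (\dim {:K})
  <= minkowski_min N (embV sr sc @` I) k * minkowski_min N (embV sr sc @` J) l.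
Proof.
rewrite dimvf in hk hl hkl *; case/andP: hk => _ kK; case/andP: hl => _ lK.
apply: le_inf_mul.
- exact: minkowski_set_neq0.
- exact: minkowski_set_neq0.
- exact: minkowski_set_ge0.
- exact: minkowski_set_ge0.
move=> _ _ [e [eI e_indep ->]] [f [fJ f_indep ->]].
by apply: (minkowski_min_mul_le hreal hdeg hdistinct) => //; rewrite -addn1.
Qed.
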